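(* Let $X$ be a $T_0$ space. For every irreducible subset $F$ of $X$ and every $x\in F^\delta$, there exists a net $(x_i)_{i\in I}$ with all $x_i\in F$ that $GSI_2$-converges to $x$.
   Context: For a $T_0$ space $X$, the specialization order is $x\le y$ iff $x\in \mathrm{cl}\{y\}$; $\uparrow A=\{x: a\le x\text{ for some } a\in A\}$, $\uparrow x=\uparrow\{x\}$; $A^\uparrow$, $A^\downarrow$ are the sets of upper and lower bounds of $A$, and $A^\delta=(A^\uparrow)^\downarrow$. A nonempty subset $A$ of a space is irreducible if whenever $A\subseteq F_1\cup F_2$ with $F_1,F_2$ closed, $A\subseteq F_1$ or $A\subseteq F_2$. $X^{(<\omega)}$ is the set of nonempty finite subsets of $X$. $P_S(X)$ is the set of nonempty compact saturated (upper) subsets of $X$ with the upper Vietoris topology, basis $\{\square U: U\text{ open}\}$, $\square U=\{Q: Q\subseteq U\}$. A net is eventually in $U$ if from some index on all its terms lie in $U$. A net $(x_i)_{i\in I}$ $GSI_2$-converges to $x$ if there exists $\mathcal F\subseteq X^{(<\omega)}$ with $\{\uparrow G: G\in\mathcal F\}$ irreducible in $P_S(X)$ such that (i) for every open $U$, if $\uparrow G\subseteq U$ for some $G\in\mathcal F$ then $x_i\in U$ eventually, and (ii) $\bigcap_{G\in\mathcal F}\uparrow G\subseteq\uparrow x$. *)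

From HB Require Import structures.
From mathcomp Require Import all_boot all_order.
From mathcomp Require Import all_classical all_reals all_analysis.
Set Implicit Arguments. Unset Strict Implicit. Unset Printing Implicit Defensive.
Local Open Scope classical_set_scope.

Section GSI2.
Variable X : topologicalType.

Definition spec_le (x y : X) : Prop := closure [set y] x.

Definition upset (A : set X) : set X := [set x | exists2 a, A a & spec_le a x].

Definition upper_bounds (A : set X) : set X := [set u | forall a, A a -> spec_le a u].
Definition lower_bounds (A : set X) : set X := [set l | forall a, A a -> spec_le l a].
Definition delta (A : set X) : set X := lower_bounds (upper_bounds A).

Definition irreducible (A : set X) : Prop :=
  A !=set0 /\
  forall F1 F2 : set X, closed F1 -> closed F2 -> A `<=` F1 `|` F2 ->
    A `<=` F1 \/ A `<=` F2.

Definition saturated (Q : set X) : Prop := upset Q `<=` Q.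
Definition PS : set (set X) := [set Q | Q !=set0 /\ compact Q /\ saturated Q].

Definition box (U : set X) : set (set X) := [set Q | PS Q /\ Q `<=` U].

(* open sets of the upper Vietoris topology on P_S(X) (generated by the
   basis of the box U, U open) *)
Definition uV_open (O : set (set X)) : Prop :=
  O `<=` PS /\ forall Q, O Q -> exists U, [/\ open U, Q `<=` U & box U `<=` O].

Definition uV_closed (C : set (set X)) : Prop :=
  C `<=` PS /\ uV_open (PS `\` C).

Definition uV_irreducible (A : set (set X)) : Prop :=
  A `<=` PS /\ A !=set0 /\
  forall C1 C2, uV_closed C1 -> uV_closed C2 -> A `<=` C1 `|` C2 ->
    A `<=` C1 \/ A `<=` C2.

Definition directed_rel (I : Type) (le : I -> I -> Prop) : Prop :=
  [/\ inhabited I, (forall i, le i i),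
      (forall i j k, le i j -> le j k -> le i k) &
      (forall i j, exists k, le i k /\ le j k)].

Definition eventually_in (I : Type) (le : I -> I -> Prop) (xn : I -> X)
  (U : set X) : Prop :=
  exists i0, forall i, le i0 i -> U (xn i).

Definition GSI2_converges (I : Type) (le : I -> I -> Prop) (xn : I -> X)
  (x : X) : Prop :=
  exists FF : set (set X),
    [/\ (forall G, FF G -> G !=set0 /\ finite_set G),
        uV_irreducible [set upset G | G in FF],
        (forall U, open U -> (exists2 G, FF G & upset G `<=` U) ->
           eventually_in le xn U) &
        \bigcap_(G in FF) upset G `<=` upset [set x]].

End GSI2.

From mathcomp Require Import all_boot all_order.
From mathcomp Require Import all_classical all_reals all_analysis.
Set Implicit Arguments. Unset Strict Implicit. Unset Printing Implicit Defensive.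
Local Open Scope classical_set_scope.

(* Index the net by the open sets meeting F, ordered by reverse inclusion, and
   let it pick a point of F in each: irreducibility of F is exactly what makes
   this index set directed.  The witnessing family is the set of singletons of
   F.  Since an open set contains the principal upset of a iff it contains a,
   the irreducibility of F transfers to the family of the upsets of its
   points, and condition (i) holds by construction.  The intersection of these
   upsets is the set of upper bounds of F, which lies above every point of
   F^delta, giving condition (ii). *)

Section SpecializationOrder.
Variable X : topologicalType.
Implicit Types (a b c : X) (U : set X).

Lemma spec_le_refl a : spec_le a a.
Proof. exact: subset_closure. Qed.

Lemma open_spec_le U a b : open U -> spec_le a b -> U a -> U b.
Proof.
move=> oU ab Ua.
by have [_ [/= -> Ub]] := ab U (open_nbhs_nbhs (conj oU Ua)).
Qed.

Lemma spec_le_trans a b c : spec_le a b -> spec_le b c -> spec_le a c.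
Proof.
move=> ab bc B; rewrite nbhsE => -[U [oU Ua] UB].
exists c; split => //; apply: UB.
exact: open_spec_le oU bc (open_spec_le oU ab Ua).
Qed.

Lemma upset1E a : upset [set a] = spec_le a.
Proof.
by apply/seteqP; split => [b [_ /= -> //]|b ab]; exists a.
Qed.

Lemma spec_le_subset_open U a : open U -> spec_le a `<=` U <-> U a.
Proof.
move=> oU; split => [|Ua b ab]; first by apply; apply: spec_le_refl.
exact: open_spec_le oU ab Ua.
Qed.

Lemma PS_spec_le a : PS (spec_le a).
Proof.
split; first by exists a; apply: spec_le_refl.
split; last by move=> c [b ab bc]; apply: spec_le_trans ab bc.
move=> G PG Ga; exists a; split; first exact: spec_le_refl.
move=> A B GA; rewrite nbhsE => -[U [oU Ua] UB].
have [b [Ab ab]] : (A `&` spec_le a) !=set0.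
  apply/set0P/eqP => A_a0; apply: (filter_not_empty G).
  by rewrite -A_a0; apply: filterI.
by exists b; split => //; apply: UB; apply: open_spec_le oU ab Ua.
Qed.

Lemma image_upset1 (A : set X) :
  [set upset G | G in [set [set a] | a in A]] = [set spec_le a | a in A].
Proof. by rewrite image_comp; congr image; apply/funext => a /=; rewrite upset1E. Qed.

Lemma bigcap_upset1 (A : set X) :
  \bigcap_(G in [set [set a] | a in A]) upset G = upper_bounds A.
Proof.
rewrite bigcap_image; apply/seteqP; split => [u Au a Aa|u Au a Aa].
  by have := Au a Aa; rewrite upset1E.
by rewrite upset1E; apply: Au.
Qed.

Lemma irreducible_meetI (F U V : set X) : irreducible F -> open U -> open V ->
  F `&` U !=set0 -> F `&` V !=set0 -> F `&` (U `&` V) !=set0.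
Proof.
move=> [_ irrF] oU oV [a [Fa Ua]] [b [Fb Vb]].
apply: contrapT => FUV0.
have : F `<=` ~` U `|` ~` V.
  move=> z Fz; apply: contrapT => /not_orP[/contrapT Uz /contrapT Vz].
  by apply: FUV0; exists z.
case/(irrF _ _ (open_closedC oU) (open_closedC oV)) => FC.
  exact: FC a Fa Ua.
exact: FC b Fb Vb.
Qed.

Lemma uV_closed_avoid (C : set (set X)) a : uV_closed C -> ~ C (spec_le a) ->
  exists2 U, open U /\ U a & forall b, U b -> ~ C (spec_le b).
Proof.
move=> [_ [_ oC]] Ca.
have [U [oU aU UC]] := oC _ (conj (PS_spec_le a) Ca).
exists U; first by split => //; rewrite -spec_le_subset_open.
move=> b Ub; suff /UC[] : box U (spec_le b) by [].
by split; [exact: PS_spec_le | rewrite spec_le_subset_open].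
Qed.

Lemma uV_irreducible_spec_le (F : set X) :
  irreducible F -> uV_irreducible [set spec_le a | a in F].
Proof.
move=> irrF; split; first by move=> _ [a _ <-]; apply: PS_spec_le.
split; first by have [a Fa] := irrF.1; exists (spec_le a), a.
move=> C1 C2 cC1 cC2 FC; apply: contrapT => /not_orP[FC1 FC2].
have [_ [[a1 Fa1 <-] Ca1]] := nonsubset FC1.
have [_ [[a2 Fa2 <-] Ca2]] := nonsubset FC2.
have [U1 [oU1 U1a1] U1C1] := uV_closed_avoid cC1 Ca1.
have [U2 [oU2 U2a2] U2C2] := uV_closed_avoid cC2 Ca2.
have [b [Fb [U1b U2b]]] : F `&` (U1 `&` U2) !=set0.
  by apply: irreducible_meetI; [| | |exists a1 |exists a2].
by case: (FC (spec_le b)); [exists b | exact: U1C1 | exact: U2C2].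
Qed.

End SpecializationOrder.

Section OpenMeetingNet.
Variables (X : topologicalType) (F : set X).

Definition open_meeting := {U : set X | open U /\ F `&` U !=set0}.

Definition open_meeting_le (U V : open_meeting) := sval V `<=` sval U.

Definition open_meeting_pick (U : open_meeting) : X :=
  sval (cid (proj2 (svalP U))).

Lemma open_meeting_pickP (U : open_meeting) : (F `&` sval U) (open_meeting_pick U).
Proof. exact: svalP. Qed.

Lemma eventually_open_meeting_pick (U : set X) : open U -> F `&` U !=set0 ->
  eventually_in open_meeting_le open_meeting_pick U.
Proof.
move=> oU FU; exists (exist _ U (conj oU FU)) => V VU.
by apply: VU; case: (open_meeting_pickP V).
Qed.

Lemma directed_open_meeting : irreducible F -> directed_rel open_meeting_le.
Proof.
move=> irrF; split => [||U V W UV VW|[U [oU FU]] [V [oV FV]]].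
- by have [a Fa] := irrF.1; apply: inhabits (exist _ setT (conj openT _)); exists a.
- by move=> U.
- by move=> x /VW /UV.
- exists (exist _ (U `&` V) (conj (openI oU oV) (irreducible_meetI irrF oU oV FU FV))).
  by split => x [].
Qed.

End OpenMeetingNet.

Theorem lemma3p6 (X : topologicalType) :
  kolmogorov_space X ->
  forall (F : set X) (x : X), irreducible F -> delta F x ->
  exists (I : Type) (le : I -> I -> Prop) (xn : I -> X),
    [/\ directed_rel le, (forall i, F (xn i)) & GSI2_converges le xn x].
Proof.
move=> _ F x irrF dx.
exists (open_meeting F), (@open_meeting_le X F), (@open_meeting_pick X F).
split; first exact: directed_open_meeting.
  by move=> U; case: (open_meeting_pickP U).
exists [set [set a] | a in F]; split.
- by move=> _ [a _ <-]; split; [exists a | exact: finite_set1].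
- by rewrite image_upset1; apply: uV_irreducible_spec_le.
- move=> U oU [_ [a Fa <-]]; rewrite upset1E spec_le_subset_open // => Ua.
  by apply: eventually_open_meeting_pick => //; exists a.
- by rewrite bigcap_upset1 upset1E; exact: dx.
Qed.
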